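(* Let $G=(V,E)$ be an undirected graph (finite or infinite) and $M=M(S)$, $M'=M(S')$ two maximal multiplices of $G$. If $M\cap M'\neq\emptyset$ then $M=M'$.
   Context: A graph $G=(V,E)$ has vertex set $V$ and edge set $E\subseteq V^2$; it is undirected if $E$ is irreflexive and symmetric. Implication classes: on $E$ define $(a,b)\Gamma(a',b')$ iff either $a=a'$ and $(b,b')\notin E$, or $b=b'$ and $(a,a')\notin E$; the classes of the transitive closure $\Gamma^*$ are the implication classes. For an implication class $A$, $A^{-1}=\{(b,a):(a,b)\in A\}$ and the color class is $\widehat A=A\cup A^{-1}$. A simplex of rank $r\ge1$ is a complete sub-graph $S=(V_S,E_S)$ of $G$ on $r+1$ vertices whose distinct undirected edges lie in distinct color classes; it is maximal if not properly contained in a larger simplex. The multiplex generated by $S$ is $M(S)=\bigcup\{\widehat A:\widehat A\text{ a color class},\ \widehat A\cap E_S\neq\emptyset\}$; it is maximal if $S$ is maximal. *)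

From Stdlib Require Import List Relations.
Import ListNotations.

Section Graphs.
Variable V : Type.
Variable E : V -> V -> Prop.

Definition undirected : Prop :=
  (forall a, ~ E a a) /\ (forall a b, E a b -> E b a).

Definition edge (e : V * V) : Prop := E (fst e) (snd e).

Definition swap (e : V * V) : V * V := (snd e, fst e).

Definition Gamma (e f : V * V) : Prop :=
  edge e /\ edge f /\
  ((fst e = fst f /\ ~ E (snd e) (snd f)) \/
   (snd e = snd f /\ ~ E (fst e) (fst f))).

(* Gamma^* : reflexive-transitive closure (used only on edges; the
   implication classes are the classes of Gamma^* on E). *)
Definition Gstar : relation (V * V) := clos_refl_trans (V * V) Gamma.

Definition impl_class (e : V * V) (f : V * V) : Prop := edge f /\ Gstar f e.

Definition color_class (e : V * V) (f : V * V) : Prop :=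
  impl_class e f \/ impl_class e (swap f).

(* A simplex of rank r >= 1, given by its vertex set S (its edge set is all
   ordered pairs of distinct vertices of S, since it is complete).
   S is finite with r+1 >= 2 elements. *)
Definition simplex (S : V -> Prop) : Prop :=
  (exists l : list V, NoDup l /\ 2 <= length l /\ forall x, S x <-> In x l) /\
  (forall a b, S a -> S b -> a <> b -> E a b) /\
  (forall a b c d, S a -> S b -> S c -> S d -> a <> b -> c <> d ->
     color_class (a, b) (c, d) ->
     (a = c /\ b = d) \/ (a = d /\ b = c)).

Definition maximal_simplex (S : V -> Prop) : Prop :=
  simplex S /\
  ~ (exists T : V -> Prop, simplex T /\ (forall x, S x -> T x) /\
       exists y, T y /\ ~ S y).

Definition multiplex (S : V -> Prop) (f : V * V) : Prop :=
  exists a b, S a /\ S b /\ a <> b /\ color_class (a, b) f.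

End Graphs.

(* Gallai's triangle lemma: if a vertex w sees both ends of an edge ab, and
   wa, wb are colored differently from ab, then every edge xy in the color
   class of ab has its ends adjacent to w, with {wx, wy} colored like
   {wa, wb}.  Now let S be a maximal simplex and u t0 t1 a triangle with three
   colors, t0 t1 in S.  If u t0 were outside M(S), the triangle lemma applied
   at the vertices of S shows that no edge u s (s in S) lies in M(S) and that
   these edges have pairwise distinct colors, so u would extend S.  Hence
   u t0 is in M(S).  If an edge cd of a simplex S' lies in M(S), say cd ~ ab
   with a, b in S, then for any further vertex u of S' the triangle lemma at u
   turns the three-colored triangle u c d into a three-colored triangle u a b
   with the same colors, so uc is in M(S).  Thus all edges of S' lie in M(S),
   M(S') is contained in M(S), and symmetrically M(S) = M(S'). *)

From Pilot Require Import Defs.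
From Stdlib Require Import List Relations.
From Stdlib Require Import Classical Setoid Morphisms.

Section MaximalMultiplices.

Variables (V : Type) (E : V -> V -> Prop).
Hypothesis E_undirected : undirected V E.

Local Notation edge := (edge V E).
Local Notation swap := (swap V).
Local Notation Gamma := (Gamma V E).
Local Notation Gstar := (Gstar V E).
Local Notation color_class := (color_class V E).
Local Notation simplex := (simplex V E).
Local Notation maximal_simplex := (maximal_simplex V E).
Local Notation multiplex := (multiplex V E).

Lemma E_irrefl a : ~ E a a.
Proof. exact (proj1 E_undirected a). Qed.

Lemma E_sym a b : E a b -> E b a.
Proof. exact (proj2 E_undirected a b). Qed.

Lemma Gamma_sym e f : Gamma e f -> Gamma f e.
Proof.
  destruct e as [a b], f as [c d]; unfold Defs.Gamma, Defs.edge; simpl.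
  intros (Hab & Hcd & [[-> Hbd] | [-> Hac]]); repeat split; auto.
  - left; split; auto; intro Hdb; apply Hbd, E_sym, Hdb.
  - right; split; auto; intro Hca; apply Hac, E_sym, Hca.
Qed.

Lemma Gamma_swap e f : Gamma e f -> Gamma (swap e) (swap f).
Proof.
  destruct e as [a b], f as [c d]; unfold Defs.Gamma, Defs.edge; simpl.
  intros (Hab & Hcd & [[-> Hbd] | [-> Hac]]); repeat split; auto using E_sym.
Qed.

Lemma Gstar_sym e f : Gstar e f -> Gstar f e.
Proof.
  induction 1 as [e f H | e | e f g _ IHef _ IHfg].
  - apply rt_step, Gamma_sym, H.
  - apply rt_refl.
  - exact (rt_trans _ _ _ _ _ IHfg IHef).
Qed.

Lemma Gstar_swap e f : Gstar e f -> Gstar (swap e) (swap f).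
Proof.
  induction 1 as [e f H | e | e f g _ IHef _ IHfg].
  - apply rt_step, Gamma_swap, H.
  - apply rt_refl.
  - exact (rt_trans _ _ _ _ _ IHef IHfg).
Qed.

Lemma Gstar_edge e f : Gstar e f -> edge f -> edge e.
Proof.
  induction 1 as [e f H | e | e f g _ IHef _ IHfg]; auto.
  intros _; exact (proj1 H).
Qed.

Lemma swap_involutive e : swap (swap e) = e.
Proof. destruct e; reflexivity. Qed.

Lemma edge_swap e : edge e -> edge (swap e).
Proof. destruct e; apply E_sym. Qed.

Definition same_color (e f : V * V) : Prop := Gstar e f \/ Gstar e (swap f).

#[local] Instance same_color_equiv : Equivalence same_color.
Proof.
  split.
  - intro e; left; apply rt_refl.
  - intros e f [H | H].
    + left; apply Gstar_sym, H.
    + right; rewrite <- (swap_involutive f) at 1.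
      apply Gstar_swap, Gstar_sym, H.
  - intros e f g [Hef | Hef] [Hfg | Hfg].
    + left; exact (rt_trans _ _ _ _ _ Hef Hfg).
    + right; exact (rt_trans _ _ _ _ _ Hef Hfg).
    + right; exact (rt_trans _ _ _ _ _ Hef (Gstar_swap _ _ Hfg)).
    + left; rewrite <- (swap_involutive g).
      exact (rt_trans _ _ _ _ _ Hef (Gstar_swap _ _ Hfg)).
Qed.

Lemma same_color_flip a b : same_color (a, b) (b, a).
Proof. right; apply rt_refl. Qed.

Lemma Gamma_same_color e f : Gamma e f -> same_color e f.
Proof. intros H; left; apply rt_step, H. Qed.

Lemma same_color_share_fst a b b' :
  E a b -> E a b' -> ~ E b b' -> same_color (a, b) (a, b').
Proof. intros; apply Gamma_same_color; repeat split; auto. Qed.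

Lemma same_color_share_snd a a' b :
  E a b -> E a' b -> ~ E a a' -> same_color (a, b) (a', b).
Proof. intros; apply Gamma_same_color; repeat split; auto. Qed.

Lemma same_color_edge e f : same_color e f -> edge f -> edge e.
Proof.
  intros [H | H] Hf; apply (Gstar_edge _ _ H); auto using edge_swap.
Qed.

Lemma color_class_same_color e f : edge e -> color_class e f <-> same_color e f.
Proof.
  intros He; split.
  - intros [[_ H] | [_ H]]; symmetry.
    + left; exact H.
    + right; rewrite <- (swap_involutive f) at 1; apply Gstar_swap, H.
  - intros H.
    assert (Hf : edge f) by (apply (same_color_edge f e); [symmetry |]; assumption).
    destruct H as [H | H]; [left | right]; split; auto using edge_swap, Gstar_sym.
Qed.

Lemma Gstar_triangle a b c :
  E a b -> E a c -> ~ same_color (a, b) (b, c) -> ~ same_color (a, c) (b, c) ->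
  forall x y, Gstar (b, c) (x, y) ->
  same_color (a, x) (a, b) /\ same_color (a, y) (a, c).
Proof.
  intros Hab Hac Hb Hc x y Hxy.
  enough (H : forall f, Gstar (b, c) f ->
            same_color (a, fst f) (a, b) /\ same_color (a, snd f) (a, c))
    by exact (H (x, y) Hxy).
  apply clos_refl_trans_ind_left; [split; reflexivity |].
  intros [x1 y1] [x2 y2] Hreach [Hx1 Hy1] Hstep; simpl in *.
  assert (Hax1 : E a x1) by exact (same_color_edge _ _ Hx1 Hab).
  assert (Hay1 : E a y1) by exact (same_color_edge _ _ Hy1 Hac).
  assert (Hback : same_color (x2, y2) (b, c)).
  { symmetry; transitivity (x1, y1);
      [left; exact Hreach | apply Gamma_same_color, Hstep]. }
  destruct Hstep as (_ & Hx2y2 & [[Hx Hy] | [Hy Hx]]); simpl in *; subst; split; auto.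
  - assert (Hay2 : E a y2).
    { (* otherwise (a, b) ~ (x2, a) ~ (x2, y2) ~ (b, c) *)
      apply NNPP; intro Hn; apply Hb.
      rewrite <- Hx1, (same_color_flip a x2), <- Hback.
      apply same_color_share_fst; auto using E_sym. }
    rewrite <- Hy1; apply same_color_share_fst; auto.
    intro H; apply Hy, E_sym, H.
  - assert (Hax2 : E a x2).
    { (* otherwise (a, c) ~ (a, y2) ~ (x2, y2) ~ (b, c) *)
      apply NNPP; intro Hn; apply Hc.
      rewrite <- Hy1, <- Hback.
      apply same_color_share_snd; auto. }
    rewrite <- Hx1; apply same_color_share_fst; auto.
    intro H; apply Hx, E_sym, H.
Qed.

Lemma same_color_triangle w a b :
  E w a -> E w b -> ~ same_color (w, a) (a, b) -> ~ same_color (w, b) (a, b) ->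
  forall x y, same_color (x, y) (a, b) ->
  (same_color (w, x) (w, a) /\ same_color (w, y) (w, b)) \/
  (same_color (w, x) (w, b) /\ same_color (w, y) (w, a)).
Proof.
  intros Hwa Hwb Ha Hb x y [Hxy | Hxy].
  - left; apply Gstar_triangle; auto using Gstar_sym.
  - right; apply Gstar_triangle; auto using Gstar_sym;
      rewrite (same_color_flip b a); assumption.
Qed.

Definition rainbow (e1 e2 e3 : V * V) : Prop :=
  ~ same_color e1 e2 /\ ~ same_color e1 e3 /\ ~ same_color e2 e3.

#[local] Instance rainbow_proper :
  Proper (same_color ==> same_color ==> same_color ==> iff) rainbow.
Proof.
  intros e1 f1 H1 e2 f2 H2 e3 f3 H3; unfold rainbow.
  rewrite H1, H2, H3; reflexivity.
Qed.

Definition colored_by (S : V -> Prop) (e : V * V) : Prop :=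
  exists a b, S a /\ S b /\ a <> b /\ same_color e (a, b).

#[local] Instance colored_by_proper S : Proper (same_color ==> iff) (colored_by S).
Proof.
  intros e f Hef; unfold colored_by.
  split; intros (a & b & Ha & Hb & Hab & H); exists a, b; repeat split; auto;
    rewrite <- H; [symmetry |]; exact Hef.
Qed.

Lemma colored_by_edge S a b : S a -> S b -> a <> b -> colored_by S (a, b).
Proof. intros; exists a, b; repeat split; auto; reflexivity. Qed.

Lemma simplex_edge S a b : simplex S -> S a -> S b -> a <> b -> E a b.
Proof. intros (_ & HE & _); apply HE. Qed.

Lemma simplex_same_color S a b c d :
  simplex S -> S a -> S b -> S c -> S d -> a <> b -> c <> d ->
  same_color (a, b) (c, d) -> (a = c /\ b = d) \/ (a = d /\ b = c).
Proof.
  intros HS Ha Hb Hc Hd Hab Hcd H.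
  apply (proj2 (proj2 HS)); auto.
  apply color_class_same_color; [exact (simplex_edge S a b HS Ha Hb Hab) | exact H].
Qed.

Lemma simplex_rainbow S u c d :
  simplex S -> S u -> S c -> S d -> u <> c -> u <> d -> c <> d ->
  rainbow (u, c) (u, d) (c, d).
Proof.
  intros HS Hu Hc Hd Huc Hud Hcd.
  repeat split; intro H; apply (simplex_same_color S) in H; auto; intuition congruence.
Qed.

Lemma multiplex_colored_by S : simplex S -> forall f, multiplex S f <-> colored_by S f.
Proof.
  intros HS f; split; intros (a & b & Ha & Hb & Hab & H); exists a, b;
    repeat split; auto; pose proof (simplex_edge S a b HS Ha Hb Hab) as Eab.
  - symmetry; apply color_class_same_color; assumption.
  - apply color_class_same_color; [| symmetry]; assumption.
Qed.

Section Spokes.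

Variable S : V -> Prop.
Hypothesis S_simplex : simplex S.

Lemma spoke_in_edge u s a b :
  S s -> S a -> S b -> a <> b -> same_color (u, s) (a, b) -> s = a \/ s = b.
Proof.
  intros Hs Ha Hb Hab Hus.
  destruct (classic (s = a)) as [| Hsa]; [now left |].
  destruct (classic (s = b)) as [| Hsb]; [now right |].
  exfalso; apply (E_irrefl s).
  destruct (simplex_rainbow S s a b) as (_ & Ha' & Hb'); auto.
  destruct (same_color_triangle s a b) with (x := u) (y := s)
    as [[_ H] | [_ H]]; eauto using simplex_edge.
  - exact (same_color_edge _ _ H (simplex_edge S s b S_simplex Hs Hb Hsb)).
  - exact (same_color_edge _ _ H (simplex_edge S s a S_simplex Hs Ha Hsa)).
Qed.

Lemma colored_spoke u s :
  S s -> colored_by S (u, s) -> exists b, S b /\ b <> s /\ same_color (u, s) (s, b).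
Proof.
  intros Hs (a & b & Ha & Hb & Hab & H).
  destruct (spoke_in_edge u s a b) as [-> | ->]; auto.
  - exists b; auto.
  - exists a; repeat split; auto.
    rewrite H; apply same_color_flip.
Qed.

Lemma spoke_transfer u s b t :
  S s -> S b -> S t -> s <> b -> t <> s -> t <> b -> same_color (u, s) (s, b) ->
  same_color (u, t) (t, s) \/ same_color (u, t) (t, b).
Proof.
  intros Hs Hb Ht Hsb Hts Htb H.
  destruct (simplex_rainbow S t s b) as (_ & Hs' & Hb'); auto.
  rewrite (same_color_flip u t).
  destruct (same_color_triangle t s b) with (x := u) (y := s)
    as [[Hu _] | [Hu _]]; eauto using simplex_edge.
Qed.

End Spokes.

Lemma simplex_extend S u :
  simplex S -> ~ S u -> (forall s, S s -> E u s) ->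
  (forall s, S s -> ~ colored_by S (u, s)) ->
  (forall s s', S s -> S s' -> s <> s' -> ~ same_color (u, s) (u, s')) ->
  simplex (fun z => z = u \/ S z).
Proof.
  intros HS Hu Hadj Hunc Hdist.
  assert (Hspoke : forall b c d, S b -> c = u \/ S c -> d = u \/ S d -> c <> d ->
            same_color (u, b) (c, d) -> (u = c /\ b = d) \/ (u = d /\ b = c)).
  { intros b c d Hb [-> | Hc] [-> | Hd] Hcd H; try contradiction.
    - left; split; auto; apply NNPP; intro; apply (Hdist b d); auto.
    - right; split; auto; apply NNPP; intro; apply (Hdist b c); auto.
      rewrite H; apply same_color_flip.
    - exfalso; apply (Hunc b Hb); rewrite H; apply colored_by_edge; auto. }
  assert (Hedge : forall a b, a = u \/ S a -> b = u \/ S b -> a <> b -> E a b).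
  { intros a b [-> | Ha] [-> | Hb] Hab; try contradiction; auto using E_sym.
    apply (simplex_edge S); auto. }
  destruct (proj1 HS) as (l & Hnd & Hlen & Hl).
  split; [| split; [exact Hedge |]].
  - exists (u :: l); repeat split; simpl; auto.
    + constructor; auto; rewrite <- Hl; exact Hu.
    + intros [-> | Hx]; [now left | right; apply Hl, Hx].
    + intros [-> | Hx]; [now left | right; apply Hl, Hx].
  - intros a b c d Ha Hb Hc Hd Hab Hcd H.
    apply color_class_same_color in H; [| exact (Hedge a b Ha Hb Hab)].
    destruct Ha as [-> | Ha]; [destruct Hb as [-> | Hb]; [contradiction | auto] |].
    destruct Hb as [-> | Hb].
    { rewrite (same_color_flip a u) in H.
      destruct (Hspoke a c d) as [[? ?] | [? ?]]; auto. }
    destruct Hc as [-> | Hc]; [| destruct Hd as [-> | Hd]].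
    + exfalso; destruct Hd as [-> | Hd]; [contradiction |].
      apply (Hunc d Hd); rewrite <- H; apply colored_by_edge; auto.
    + exfalso; apply (Hunc c Hc).
      rewrite (same_color_flip u c), <- H; apply colored_by_edge; auto.
    + apply (simplex_same_color S); auto.
Qed.

(* [t0_uncolored] is the hypothesis of a proof by contradiction: under it,
   [u] extends [S] to a larger simplex. *)
Section Extension.

Variables (S : V -> Prop) (u t0 t1 : V).
Hypotheses (S_simplex : simplex S) (t0_in : S t0) (t1_in : S t1) (t01 : t0 <> t1)
  (u_t0 : E u t0) (u_t1 : E u t1) (u_rainbow : rainbow (u, t0) (u, t1) (t0, t1))
  (t0_uncolored : ~ colored_by S (u, t0)).

Lemma apex_not_in : ~ S u.
Proof.
  intro Hu; apply t0_uncolored, colored_by_edge; auto.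
  intros ->; exact (E_irrefl _ u_t0).
Qed.

Lemma apex_adjacent s : S s -> E u s.
Proof.
  intros Hs; apply NNPP; intro Hn.
  destruct (classic (s = t0)) as [-> | Hs0]; [contradiction |].
  apply t0_uncolored.
  rewrite (same_color_share_snd u s t0); eauto using simplex_edge, colored_by_edge.
Qed.

Lemma apex_spokes_uncolored s : S s -> ~ colored_by S (u, s).
Proof.
  assert (Hnot : forall s b, S s -> S b -> s <> t0 -> b <> s -> b <> t0 ->
            ~ same_color (u, s) (s, b)).
  { intros s' b Hs Hb Hs0 Hbs Hb0 H; apply t0_uncolored.
    destruct (spoke_transfer S S_simplex u s' b t0) as [H' | H']; auto;
      rewrite H'; apply colored_by_edge; auto. }
  assert (Ht1 : ~ same_color (u, t1) (t1, t0)).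
  { intro H; apply (proj2 (proj2 u_rainbow)).
    rewrite H; apply same_color_flip. }
  intros Hs Hc.
  destruct (classic (s = t0)) as [-> | Hs0]; [contradiction |].
  destruct (colored_spoke S S_simplex u s Hs Hc) as (b & Hb & Hbs & H).
  destruct (classic (b = t0)) as [-> | Hb0]; [| exact (Hnot s b Hs Hb Hs0 Hbs Hb0 H)].
  destruct (classic (s = t1)) as [-> | Hs1]; [contradiction |].
  destruct (spoke_transfer S S_simplex u s t0 t1) as [H' | H']; auto.
  exact (Hnot t1 s t1_in Hs (not_eq_sym t01) Hs1 Hs0 H').
Qed.

Lemma apex_spokes_distinct_colors s s' :
  S s -> S s' -> s <> s' -> ~ same_color (u, s) (u, s').
Proof.
  intros Hs Hs' Hss' H.
  assert (Hv : exists v, S v /\ E u v /\ ~ same_color (u, v) (u, s)).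
  { destruct (classic (same_color (u, t0) (u, s))) as [H0 | H0];
      [exists t1 | exists t0]; repeat split; auto.
    intro H1; apply (proj1 u_rainbow); rewrite H0, H1; reflexivity. }
  destruct Hv as (v & Hv & Huv & Hnv).
  assert (Hvs : v <> s) by (intros ->; apply Hnv; reflexivity).
  assert (Hvs' : v <> s') by (intros ->; apply Hnv; symmetry; exact H).
  destruct (same_color_triangle v u s) with (x := u) (y := s')
    as [[_ Hs'v] | [Hu _]]; eauto using E_sym, simplex_edge.
  - rewrite <- (same_color_flip u v); exact Hnv.
  - intro Hc; apply (apex_spokes_uncolored s Hs).
    rewrite <- Hc; apply colored_by_edge; auto.
  - symmetry; exact H.
  - destruct (simplex_same_color S v s' v s) as [[_ ->] | [-> _]]; auto.
  - apply (apex_spokes_uncolored v Hv).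
    rewrite (same_color_flip u v), Hu; apply colored_by_edge; auto.
Qed.

End Extension.

Lemma rainbow_triangle_colored S u t0 t1 :
  maximal_simplex S -> S t0 -> S t1 -> t0 <> t1 -> E u t0 -> E u t1 ->
  rainbow (u, t0) (u, t1) (t0, t1) -> colored_by S (u, t0).
Proof.
  intros [HS Hmax] H0 H1 H01 Hu0 Hu1 Hrb.
  apply NNPP; intro Hunc.
  apply Hmax; exists (fun z => z = u \/ S z); split; [| split].
  - apply simplex_extend; eauto using apex_not_in, apex_adjacent,
      apex_spokes_uncolored, apex_spokes_distinct_colors.
  - now right.
  - exists u; split; [now left | eauto using apex_not_in].
Qed.

Section TwoSimplices.

Variables S S' : V -> Prop.
Hypotheses (S_maximal : maximal_simplex S) (S'_simplex : simplex S').

Lemma colored_apex c d u :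
  S' c -> S' d -> S' u -> c <> d -> u <> c -> u <> d ->
  colored_by S (c, d) -> colored_by S (u, c).
Proof.
  intros Hc Hd Hu Hcd Huc Hud (a & b & Ha & Hb & Hab & Hcol).
  pose proof (simplex_rainbow S' u c d S'_simplex Hu Hc Hd Huc Hud Hcd) as Hrb.
  assert (Euc : E u c) by exact (simplex_edge S' u c S'_simplex Hu Hc Huc).
  assert (Eud : E u d) by exact (simplex_edge S' u d S'_simplex Hu Hd Hud).
  assert (Hcase : forall a b, S a -> S b -> a <> b -> same_color (a, b) (c, d) ->
            same_color (u, a) (u, c) -> same_color (u, b) (u, d) -> colored_by S (u, c)).
  { intros a' b' Ha' Hb' Hab' Habcd Hac Hbd.
    rewrite <- Hac.
    apply (rainbow_triangle_colored S u a' b'); auto.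
    - exact (same_color_edge _ _ Hac Euc).
    - exact (same_color_edge _ _ Hbd Eud).
    - rewrite Hac, Hbd, Habcd; exact Hrb. }
  destruct Hrb as (_ & Hc' & Hd').
  destruct (same_color_triangle u c d) with (x := a) (y := b)
    as [[Hac Hbd] | [Had Hbc]]; auto.
  - symmetry; exact Hcol.
  - exact (Hcase a b Ha Hb Hab (symmetry Hcol) Hac Hbd).
  - apply (Hcase b a); auto.
    rewrite (same_color_flip b a), Hcol; reflexivity.
Qed.

Lemma colored_spokes_of_edge c d :
  S' c -> S' d -> c <> d -> colored_by S (c, d) ->
  forall x, S' x -> x <> c -> colored_by S (x, c).
Proof.
  intros Hc Hd Hcd H x Hx Hxc.
  destruct (classic (x = d)) as [-> | Hxd].
  - rewrite (same_color_flip d c); exact H.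
  - apply (colored_apex c d); auto.
Qed.

Lemma colored_simplex_edges c d :
  S' c -> S' d -> c <> d -> colored_by S (c, d) ->
  forall x y, S' x -> S' y -> x <> y -> colored_by S (x, y).
Proof.
  intros Hc Hd Hcd H x y Hx Hy Hxy.
  destruct (classic (y = c)) as [-> | Hyc].
  - apply (colored_spokes_of_edge c d); auto.
  - apply (colored_spokes_of_edge y c); auto.
    apply (colored_spokes_of_edge c d); auto.
Qed.

Lemma colored_by_incl :
  (exists f, colored_by S f /\ colored_by S' f) ->
  forall f, colored_by S' f -> colored_by S f.
Proof.
  intros (f0 & H0 & (c & d & Hc & Hd & Hcd & Hf0)) f (x & y & Hx & Hy & Hxy & Hf).
  rewrite Hf; apply (colored_simplex_edges c d); auto.
  rewrite <- Hf0; exact H0.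
Qed.

End TwoSimplices.

End MaximalMultiplices.

Theorem corollary4p7 (V : Type) (E : V -> V -> Prop) (S S' : V -> Prop) :
  undirected V E ->
  maximal_simplex V E S -> maximal_simplex V E S' ->
  (exists f, multiplex V E S f /\ multiplex V E S' f) ->
  forall f, multiplex V E S f <-> multiplex V E S' f.
Proof.
  intros HU HM HM' (f0 & Hf0 & Hf0') f.
  rewrite !(multiplex_colored_by V E HU S (proj1 HM)),
    !(multiplex_colored_by V E HU S' (proj1 HM')) in *.
  split.
  - apply (colored_by_incl V E HU S' S HM' (proj1 HM)); now exists f0.
  - apply (colored_by_incl V E HU S S' HM (proj1 HM')); now exists f0.
Qed.
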